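(* Fix integers $N\ge 2$ and $K\ge 1$. For any Boolean tensor $\mathcal{B}\in\{0,1\}^{N\times N\times K}$ with frontal slices $\mathbf{B}_1,\dots,\mathbf{B}_K$, and any $r\in\mathbb{N}^+$ with \[ r\ge\min\Big\{N,\;2\sum_{k=1}^K\mathrm{rrank}(\mathbf{B}_k)\Big\},\] the set $\pi(\mathcal{M}^{\text{RESCAL}}_r)$ contains a ranking tensor consistent with $\mathcal{B}$.
   Context: A score-based model assigns a score $s_k(i,j)\in\mathbb{R}$ to each triple, $i,j\in\{1,\dots,N\}$, $k\in\{1,\dots,K\}$; its scoring tensor has frontal slices $\mathbf{S}_k$ with $[\mathbf{S}_k]_{ij}=s_k(i,j)$. For a real $N\times N$ matrix $\mathbf{S}$, $\pi(\mathbf{S})$ is the matrix of dense ranks: $\pi_{ij}(\mathbf{S})=1+$ (number of distinct values among entries of $\mathbf{S}$ strictly larger than $s_{ij}$). For tensors, $\pi$ acts slicewise; for a set $X$, $\pi(X)=\{\pi(x):x\in X\}$. RESCAL of size $r$: parameters $\mathbf{A}\in\mathbb{R}^{N\times r}$ (rows $\mathbf{a}_i$), $\mathbf{R}_1,\dots,\mathbf{R}_K\in\mathbb{R}^{r\times r}$, score $\mathbf{a}_i^T\mathbf{R}_k\mathbf{a}_j$; $\mathcal{M}^{\text{RESCAL}}_r$ is the set of scoring tensors of such models. A ranking tensor $\mathcal{P}$ is consistent with $\mathcal{B}$ if for every $k$ and all $i,j,i',j'$: $b_{ijk}=1$ and $b_{i'j'k}=0$ imply $p_{ijk}<p_{i'j'k}$.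 Rounding rank: for a real matrix, $\mathrm{round}$ maps each entry $x$ to $1$ if $x\ge 1/2$ and to $0$ otherwise; for a Boolean matrix $\mathbf{B}\in\{0,1\}^{m\times n}$, $\mathrm{rrank}(\mathbf{B})=\min\{\mathrm{rank}(\mathbf{A}):\mathbf{A}\in\mathbb{R}^{m\times n},\ \mathrm{round}(\mathbf{A})=\mathbf{B}\}$. *)

From HB Require Import structures.
From mathcomp Require Import all_boot all_order all_algebra.
From mathcomp Require Import boolp reals.
Set Implicit Arguments. Unset Strict Implicit. Unset Printing Implicit Defensive.
Import Order.TTheory GRing.Theory Num.Theory.
Local Open Scope ring_scope.

Definition round_mx (R : realType) (m n : nat) (A : 'M[R]_(m, n)) : 'M[bool]_(m, n) :=
  map_mx (fun x => (2%:R^-1 <= x)) A.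

Definition has_rounding_rank (R : realType) (m n : nat) (B : 'M[bool]_(m, n)) (k : nat) : bool :=
  `[< exists A : 'M[R]_(m, n), round_mx A = B /\ \rank A = k >].

Lemma has_rounding_rank_ex (R : realType) (m n : nat) (B : 'M[bool]_(m, n)) :
  exists k, has_rounding_rank R B k.
Proof.
exists (\rank (map_mx (fun b : bool => (b%:R : R)) B)).
apply/asboolP; eexists; split; last reflexivity.
apply/matrixP => i j; rewrite !mxE.
case: (B i j) => /=.
- by rewrite invf_le1 ?ler1n // ltr0n.
- by apply/negbTE; rewrite -ltNge invr_gt0 ltr0n.
Qed.

Definition rrank (R : realType) (m n : nat) (B : 'M[bool]_(m, n)) : nat :=
  ex_minn (has_rounding_rank_ex R B).

Definition entries (R : realType) (N : nat) (S : 'M[R]_N) : seq R :=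
  [seq S ij.1 ij.2 | ij : 'I_N * 'I_N].

Definition dense_rank (R : realType) (N : nat) (S : 'M[R]_N) : 'M[nat]_N :=
  \matrix_(i, j) (size (undup [seq x <- entries S | S i j < x])).+1.

Definition rescal_score (R : realType) (N K r : nat)
  (A : 'M[R]_(N, r)) (Rs : 'I_K -> 'M[R]_r) : 'I_K -> 'M[R]_N :=
  fun k => \matrix_(i, j) (row i A *m Rs k *m (row j A)^T) 0 0.

Definition consistent (N K : nat) (P : 'I_K -> 'M[nat]_N) (B : 'I_K -> 'M[bool]_N) : Prop :=
  forall k (i j i' j' : 'I_N), B k i j = true -> B k i' j' = false ->
    (P k i j < P k i' j')%N.

(** Each slice [B_k] is the rounding of a real matrix [M_k] of rank
    [rrank B_k]; factor [M_k = C_k D_k^T] with [C_k, D_k] of width [rrank B_k]. Put all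
    the [C_k] and [D_k] side by side into one [N x 2 sum_k rrank B_k] factor
    [W]; the block matrix [R_k] pairing the [C_k] columns with the [D_k]
    columns gives [W R_k W^T = M_k], whose entries are [>= 1/2] exactly on
    the ones of [B_k]. Padding [W] with zero columns reaches any larger size
    [r]. When [N <= r], take [W = 1] and [R_k = B_k] instead. Dense ranks
    reverse the strict order of scores, hence consistency. *)
From HB Require Import structures.
From mathcomp Require Import all_boot all_order all_algebra.
From mathcomp Require Import boolp reals.
Import Order.TTheory GRing.Theory Num.Theory.
Set Implicit Arguments. Unset Strict Implicit. Unset Printing Implicit Defensive.
Local Open Scope ring_scope.

Definition separates (R : numDomainType) (m n : nat)
    (S : 'M[R]_(m, n)) (B : 'M[bool]_(m, n)) : Prop :=
  forall i j i' j', B i j -> ~~ B i' j' -> S i' j' < S i j.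

Lemma separates_round (R : realType) (m n : nat) (M : 'M[R]_(m, n)) B :
  round_mx M = B -> separates M B.
Proof.
move=> <- i j i' j'; rewrite !mxE -ltNge => half_le half_gt.
exact: lt_le_trans half_gt half_le.
Qed.

Lemma separates_bool_mx (R : numDomainType) (m n : nat) (B : 'M[bool]_(m, n)) :
  separates (map_mx (fun b : bool => b%:R : R) B) B.
Proof. by move=> i j i' j' Bij /negbTE Bij'; rewrite !mxE Bij Bij' ltr01. Qed.

Lemma rrank_witness (R : realType) (m n : nat) (B : 'M[bool]_(m, n)) :
  exists M : 'M[R]_(m, n), round_mx M = B /\ \rank M = rrank R B.
Proof. by rewrite /rrank; case: ex_minnP => k /asboolP [M [roundM rankM]] _; exists M. Qed.

Lemma dense_rank_lt (R : realType) (N : nat) (S : 'M[R]_N) i j i' j' :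
  S i' j' < S i j -> (dense_rank S i j < dense_rank S i' j')%N.
Proof.
move=> lt_ij; rewrite !mxE ltnS.
have Sij_entry : S i j \in entries S by apply/mapP; exists (i, j); rewrite ?mem_enum.
have uniq_above : uniq (S i j :: undup [seq x <- entries S | S i j < x]).
  by rewrite /= undup_uniq andbT mem_undup mem_filter ltxx.
apply: uniq_leq_size uniq_above _ => x.
rewrite inE !mem_undup !mem_filter.
case/orP => [/eqP -> | /andP [lt_x ->]]; first by rewrite lt_ij Sij_entry.
by rewrite (lt_trans lt_ij lt_x).
Qed.

Lemma consistent_of_separates (R : realType) (N K r : nat)
    (A : 'M[R]_(N, r)) (Rs : 'I_K -> 'M[R]_r) (B : 'I_K -> 'M[bool]_N) :
  (forall k, separates (rescal_score A Rs k) (B k)) ->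
  consistent (fun k => dense_rank (rescal_score A Rs k)) B.
Proof.
move=> sepAB k i j i' j' Bij Bij'; apply: dense_rank_lt.
by apply: sepAB; rewrite ?Bij'.
Qed.

Lemma rescal_scoreE (R : realType) (N K r : nat)
    (A : 'M[R]_(N, r)) (Rs : 'I_K -> 'M[R]_r) k :
  rescal_score A Rs k = A *m Rs k *m A^T.
Proof.
apply/matrixP => i j; rewrite mxE -row_mul tr_row !mxE.
by apply: eq_bigr => l _; rewrite !mxE.
Qed.

(* Right multiplication by [pid_mx s] appends zero columns, and
   [pid_mx s *m (pid_mx s)^T = 1] when [s <= r]. *)
Lemma rescal_score_widen (R : realType) (N K s r : nat)
    (W : 'M[R]_(N, s)) (Q : 'I_K -> 'M[R]_s) :
  (s <= r)%N ->
  exists (A : 'M[R]_(N, r)) (Rs : 'I_K -> 'M[R]_r),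
    forall k, rescal_score A Rs k = W *m Q k *m W^T.
Proof.
move=> le_sr; pose P : 'M[R]_(s, r) := pid_mx s.
have PPt : P *m P^T = 1%:M.
  by rewrite tr_pid_mx mul_pid_mx minnn (minn_idPr le_sr) pid_mx_1.
exists (W *m P), (fun k => P^T *m Q k *m P) => k.
rewrite rescal_scoreE trmx_mul !mulmxA -(mulmxA W) PPt mulmx1.
by rewrite -(mulmxA _ P) PPt mulmx1.
Qed.

Lemma shared_factorization (R : pzRingType) (N K : nat) (q : 'I_K -> nat)
    (U V : forall k, 'M[R]_(N, q k)) :
  exists (W : 'M[R]_(N, \sum_k q k + \sum_k q k))
         (Q : 'I_K -> 'M[R]_(\sum_k q k + \sum_k q k)),
    forall k, W *m Q k *m W^T = U k *m (V k)^T.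
Proof.
pose select k := \mxdiag_j (((j == k)%:R)%:M : 'M[R]_(q j)).
exists (row_mx (\mxrow_j U j) (\mxrow_j V j)), (fun k => block_mx 0 (select k) 0 0).
move=> k; rewrite mul_row_block !mulmx0 !addr0 tr_row_mx mul_row_col mul0mx add0r.
rewrite mul_mxrow_mxdiag tr_mxrow mul_mxrow_mxcol.
rewrite (bigD1 k) //= eqxx mulmx1 big1 ?addr0 // => j /negbTE ->.
by rewrite raddf0 mulmx0 mul0mx.
Qed.

Theorem theorem11 (R : realType) (N K : nat) (HN : (2 <= N)%N) (HK : (1 <= K)%N)
  (B : 'I_K -> 'M[bool]_N) (r : nat) (Hr : (0 < r)%N)
  (Hrr : (minn N (2 * \sum_(k < K) rrank R (B k)) <= r)%N) :
  exists (A : 'M[R]_(N, r)) (Rs : 'I_K -> 'M[R]_r),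
    consistent (fun k => dense_rank (rescal_score A Rs k)) B.
Proof.
case: (leqP N r) => [le_Nr | lt_rN].
  have [A [Rs scoreE]] := rescal_score_widen (1%:M : 'M[R]_N)
    (fun k => map_mx (fun b : bool => b%:R : R) (B k)) le_Nr.
  exists A, Rs; apply: consistent_of_separates => k.
  by rewrite scoreE mul1mx trmx1 mulmx1; apply: separates_bool_mx.
have /choice [M /all_and2 [roundM rankM]] := fun k => rrank_witness R (B k).
have [W [Q WQ]] := shared_factorization (fun k => col_base (M k))
                                        (fun k => (row_base (M k))^T).
have le_width : (\sum_k \rank (M k) + \sum_k \rank (M k) <= r)%N.
  rewrite addnn -mul2n (eq_bigr _ (fun k _ => rankM k)).
  by move: Hrr; rewrite geq_min leqNgt lt_rN.
have [A [Rs scoreE]] := rescal_score_widen W Q le_width.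
exists A, Rs; apply: consistent_of_separates => k.
by rewrite scoreE WQ trmxK mulmx_base; apply: separates_round.
Qed.
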